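(* Let $A$ be a sesquiad. (a) $A$ is noetherian if and only if every ascending chain $C_1\subset C_2\subset\cdots$ of congruences on $A$ is eventually stationary. (b) If $A$ is noetherian and $\phi:A\to B$ is a surjective sesquiad morphism, then $B$ is noetherian. (c) Every finitely generated sesquiad is noetherian. (d) If $A$ is noetherian, then the topological space $\operatorname{spec}_cA$ is noetherian.
   Context: Monoids are commutative with $1$ and a zero $0$. A sesquiad is a monoid $A$ with an addition: partially defined sums $\sum_jk_ja_j$ coming from an injective monoid morphism $\varphi:A\to R$ into a commutative ring with $\varphi(0)=0$, defined exactly when $\sum_jk_j\varphi(a_j)\in\varphi(A)$; sesquiad morphisms are monoid morphisms preserving defined sums. A congruence is an equivalence relation $\mathcal C$ on $A$ such that $A/\mathcal C$ admits an addition making $A\to A/\mathcal C$ a sesquiad morphism. A congruence $C$ is finitely generated if there are $a,b\in A^n$ such that $C$ is the intersection of all congruences $E$ with $a_1\sim_Eb_1,\dots,a_n\sim_Eb_n$; $A$ is noetherian if every congruence is finitely generated. A sesquiad is finitely generated if it is the image of a surjective sesquiad morphism from the free monoid $\langle T_1,\dots,T_n\rangle$ (monomials in $T_1,\dots,T_n$ together with $0$, with trivial addition, i.e. only sums involving $0$ defined; its universal ring is $\mathbb Z[T_1,\dots,T_n]$). A prime congruence is one with $A/\mathcal C$ integral ($1\not\sim0$; $af\sim bf\Rightarrow a\sim b$ or $f\sim0$); $\operatorname{spec}_cA$ is the set of prime congruences with topology generated by $D(a,b)=\{\mathcal C:(a,b)\notin\mathcal C\}$. A topological space is noetherian if every descending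 chain of closed subsets stabilizes. *)

From Stdlib Require List.
From HB Require Import structures.
From mathcomp Require Import all_boot all_order all_algebra.
Set Implicit Arguments. Unset Strict Implicit. Unset Printing Implicit Defensive.
Import Order.TTheory GRing.Theory Num.Theory.
Local Open Scope ring_scope.

(** A formal Z-linear combination  sum_j k_j a_j  is a list of pairs (k_j, a_j).
    The "sum relation" [s l b] means: the sum [l] is defined and equals [b]. *)
Definition sumrel (A : Type) := seq (int * A) -> A -> Prop.

Definition is_sesquiad (A : Type) (mul : A -> A -> A) (one zero : A)
    (s : sumrel A) : Prop :=
  [/\ (forall x y, mul x y = mul y x),
      (forall x y z, mul x (mul y z) = mul (mul x y) z),
      (forall x, mul one x = x),
      (forall x, mul zero x = zero) &
      exists (R : comPzRingType) (phi : A -> R),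
        [/\ injective phi,
            (forall x y, phi (mul x y) = phi x * phi y),
            phi one = 1, phi zero = 0 &
            forall l b, s l b <-> \sum_(p <- l) (phi p.2 *~ p.1) = phi b]].

Record sesquiad := Sesquiad {
  sq_car :> Type;
  sq_mul : sq_car -> sq_car -> sq_car;
  sq_one : sq_car;
  sq_zero : sq_car;
  sq_sum : sumrel sq_car;
  sq_ax : is_sesquiad sq_mul sq_one sq_zero sq_sum }.

Definition is_morph_raw (A B : Type) (mulA : A -> A -> A) (oneA zeroA : A)
    (sA : sumrel A) (mulB : B -> B -> B) (oneB zeroB : B) (sB : sumrel B)
    (f : A -> B) : Prop :=
  [/\ (forall x y, f (mulA x y) = mulB (f x) (f y)),
      f oneA = oneB, f zeroA = zeroB &
      forall l b, sA l b -> sB [seq (p.1, f p.2) | p <- l] (f b)].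

Definition is_sq_morph (A B : sesquiad) (f : A -> B) : Prop :=
  is_morph_raw (@sq_mul A) (sq_one A) (sq_zero A) (@sq_sum A)
               (@sq_mul B) (sq_one B) (sq_zero B) (@sq_sum B) f.

Definition rel (A : Type) := A -> A -> Prop.

(** The quotient A/C is
    represented (up to isomorphism) by a sesquiad Q with a surjective morphism
    pi : A -> Q whose kernel relation is exactly C. *)
Definition is_congruence (A : sesquiad) (C : rel A) : Prop :=
  exists (Q : sesquiad) (pi : A -> Q),
    [/\ is_sq_morph pi, (forall q : Q, exists a, pi a = q) &
        forall a b, C a b <-> pi a = pi b].

Definition generated_by (A : sesquiad) (C : rel A) (g : seq (A * A)) : Prop :=
  forall x y, C x y <->
    (forall E : rel A, is_congruence E ->
       (forall p, List.In p g -> E p.1 p.2) -> E x y).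

Definition fg_congruence (A : sesquiad) (C : rel A) : Prop :=
  exists g : seq (A * A), generated_by C g.

Definition noetherian (A : sesquiad) : Prop :=
  forall C : rel A, is_congruence C -> fg_congruence C.

Definition acc_congruences (A : sesquiad) : Prop :=
  forall C : nat -> rel A,
    (forall n, is_congruence (C n)) ->
    (forall n x y, C n x y -> C n.+1 x y) ->
    exists N, forall n, (N <= n)%N -> forall x y, C n x y <-> C N x y.

(** The free monoid <T_1,...,T_n>: monomials (exponent vectors) plus 0 (None). *)
Definition free_car (n : nat) := option {ffun 'I_n -> nat}.
Definition free_mul (n : nat) (x y : free_car n) : free_car n :=
  match x, y with
  | Some m, Some m' => Some [ffun i => (m i + m' i)%N]
  | _, _ => None
  end.
Definition free_one (n : nat) : free_car n := Some [ffun => 0%N].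
Definition free_zero (n : nat) : free_car n := None.
(** Its addition, induced by the embedding into Z[T_1,...,T_n]
    (monomial |-> monomial, 0 |-> 0): sum_j k_j a_j = b holds iff for every
    monomial m, the coefficient of m on both sides agrees. *)
Definition free_sum (n : nat) : sumrel (free_car n) :=
  fun l b => forall m : {ffun 'I_n -> nat},
    \sum_(p <- l | p.2 == Some m) p.1 = ((b == Some m) : nat)%:Z.

Definition fg_sesquiad (A : sesquiad) : Prop :=
  exists (n : nat) (f : free_car n -> A),
    is_morph_raw (@free_mul n) (free_one n) (free_zero n) (@free_sum n)
                 (@sq_mul A) (sq_one A) (sq_zero A) (@sq_sum A) f
    /\ (forall a : A, exists x, f x = a).

Definition is_prime_congruence (A : sesquiad) (C : rel A) : Prop :=
  [/\ is_congruence C, ~ C (sq_one A) (sq_zero A) &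
      forall a b f, C (sq_mul a f) (sq_mul b f) -> C a b \/ C f (sq_zero A)].

(** Subsets of spec_c A are predicates on relations (only their values on
    prime congruences matter). *)
Definition specset (A : sesquiad) := rel A -> Prop.

Definition Dset (A : sesquiad) (a b : A) : specset A := fun C => ~ C a b.

(** Open sets of the topology generated by the sets D(a,b): every point of U
    lies in a finite intersection of D(a_i,b_i)'s contained in U. *)
Definition spec_open (A : sesquiad) (U : specset A) : Prop :=
  forall C, is_prime_congruence C -> U C ->
    exists g : seq (A * A),
      (forall p, List.In p g -> Dset p.1 p.2 C) /\
      (forall C', is_prime_congruence C' ->
         (forall p, List.In p g -> Dset p.1 p.2 C') -> U C').

Definition spec_closed (A : sesquiad) (Z : specset A) : Prop :=
  spec_open (fun C => ~ Z C).

Definition spec_noetherian (A : sesquiad) : Prop :=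
  forall Z : nat -> specset A,
    (forall n, spec_closed (Z n)) ->
    (forall n C, is_prime_congruence C -> Z n.+1 C -> Z n C) ->
    exists N, forall n, (N <= n)%N ->
      forall C, is_prime_congruence C -> (Z n C <-> Z N C).

(* Fix an embedding phi of A into a ring R and let Z[A] be the subring of R
   spanned by phi(A).  Congruences are exactly the kernels of representations
   of A in commutative rings, and the congruence generated by G is the kernel
   of A -> Z[A]/I_G, where I_G is the ideal of Z[A] generated by the
   phi a - phi b with G a b; conversely, phi x - phi y lies in I_C for a
   congruence C only if x ~_C y, since relations in Z[A] are defined sums of A.
   So congruences behave like ideals of Z[A]: ascending chains are handled as
   for ideals, images pull back, and a finitely generated A has Z[A] a
   quotient of Z[T_1,...,T_n], which is noetherian by Hilbert's basis theorem.
   For the spectrum, noetherian induction on congruences shows that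
   descending chains of closed sets inside the zero locus V(C) stabilize: if
   C is not prime, V(C) is covered by two V(C') with C' strictly larger; if C
   is prime and misses some Z_N, a basic open set around C avoiding Z_N
   covers Z_N by finitely many V(C + (a, b)). *)

From Pilot Require Import Defs.
From HB Require Import structures.
From mathcomp Require Import all_boot all_order all_algebra ring_quotient.
From mathcomp Require Import boolp ring.
Import Defs.
Set Implicit Arguments. Unset Strict Implicit. Unset Printing Implicit Defensive.
Import GRing.Theory.
Local Open Scope ring_scope.

Definition rel_le (A : Type) (C D : rel A) := forall x y, C x y -> D x y.

Definition rel_lt (A : Type) (C D : rel A) :=
  rel_le C D /\ exists x y, D x y /\ ~ C x y.

Definition rel_of_seq (A : Type) (g : seq (A * A)) : rel A :=
  fun a b => List.In (a, b) g.

Lemma rel_chain_le (A : Type) (C : nat -> rel A) :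
  (forall n x y, C n x y -> C n.+1 x y) -> {homo C : m n / (m <= n)%N >-> rel_le m n}.
Proof.
move=> C_incr; apply: homo_leq => [D x y //|D2 D1 D3 D12 D23 x y /D12/D23 //|n].
exact: C_incr.
Qed.

(** * Quotients of subrings by ideals *)

Definition ideal (T : comPzRingType) (J : T -> Prop) :=
  [/\ J 0, (forall x y, J x -> J y -> J (x + y)) & (forall x y, J y -> J (x * y))].

Definition subring (R : comPzRingType) (S : R -> Prop) :=
  [/\ S 1, (forall x y, S x -> S y -> S (x - y))
      & (forall x y, S x -> S y -> S (x * y))].

Section IdealQuotient.
Local Open Scope quotient_scope.
Variables (T : comPzRingType) (J : T -> Prop).

Definition ideal_pred of ideal J : {pred T} := fun x => `[< J x >].

Variable hJ : ideal J.

Lemma idealN x : J x -> J (- x).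
Proof. by have [_ _ JM] := hJ; move=> Jx; rewrite -mulN1r; apply: JM. Qed.

Lemma idealB x y : J x -> J y -> J (x - y).
Proof. by have [_ JD _] := hJ; move=> Jx Jy; apply: JD => //; apply: idealN. Qed.

Fact ideal_pred_zmod_closed : zmod_closed (ideal_pred hJ).
Proof.
split=> [|x y /asboolP Jx /asboolP Jy]; apply/asboolP; last exact: idealB.
by case: hJ.
Qed.
HB.instance Definition _ := GRing.isZmodClosed.Build T (ideal_pred hJ)
  ideal_pred_zmod_closed.

(* ring_quotient only quotients by proper ideals, but its additive quotient
   works for any ideal; we equip it with the (possibly zero) ring structure. *)
Definition ideal_quot := Quotient.quot (ideal_pred hJ).
Local Notation Q := ideal_quot.
HB.instance Definition _ := GRing.Zmodule.on Q.
HB.instance Definition _ := Choice.on Q.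
HB.instance Definition _ := EqQuotient.on Q.

Lemma pi_quotE x y : \pi_Q x = \pi_Q y <-> J (x - y).
Proof. by rewrite (rwP eqP) (@eqquotE _ _ Q); split=> /asboolP. Qed.

Lemma repr_quotE x : J (repr (\pi_Q x) - x).
Proof. by apply/pi_quotE; rewrite reprK. Qed.

Definition qone : Q := lift_cst Q 1.
Definition qmul := lift_op2 Q *%R.
Canonical pi_qone_morph := PiConst qone.

Lemma pi_qmul : {morph \pi_Q : x y / x * y >-> qmul x y}.
Proof.
move=> x y; unlock qmul; apply/pi_quotE.
have [_ JD JM] := hJ; set x' := repr _; set y' := repr _.
have -> : x * y - x' * y' = - (x * (y' - y) + (x' - x) * y') by ring.
apply/idealN/JD; first exact/JM/repr_quotE.
by rewrite mulrC; apply/JM/repr_quotE.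
Qed.
Canonical pi_qmul_morph := PiMorph2 pi_qmul.

Lemma qmulA : associative qmul.
Proof. by move=> x y z; rewrite -[x]reprK -[y]reprK -[z]reprK !piE mulrA. Qed.
Lemma qmulC : commutative qmul.
Proof. by move=> x y; rewrite -[x]reprK -[y]reprK !piE mulrC. Qed.
Lemma qmul1 : left_id qone qmul.
Proof. by move=> x; rewrite -[x]reprK !piE mul1r. Qed.
Lemma qmulDl : left_distributive qmul +%R.
Proof. by move=> x y z; rewrite -[x]reprK -[y]reprK -[z]reprK !piE mulrDl. Qed.
HB.instance Definition _ :=
  GRing.Zmodule_isComPzRing.Build Q qmulA qmulC qmul1 qmulDl.

Definition qproj (x : T) : Q := \pi_Q x.

Fact qproj_is_zmod_morphism : zmod_morphism qproj.
Proof. by move=> x y; rewrite /qproj !piE. Qed.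
Fact qproj_is_monoid_morphism : monoid_morphism qproj.
Proof. by split=> [|x y]; rewrite /qproj !piE. Qed.
HB.instance Definition _ :=
  GRing.isZmodMorphism.Build T Q qproj qproj_is_zmod_morphism.
HB.instance Definition _ :=
  GRing.isMonoidMorphism.Build T Q qproj qproj_is_monoid_morphism.

Lemma qproj_eq x y : qproj x = qproj y <-> J (x - y).
Proof. exact: pi_quotE. Qed.

End IdealQuotient.

Section Subring.
Variables (R : comPzRingType) (S : R -> Prop).

Definition subring_pred of subring S : {pred R} := fun x => `[< S x >].

Variable hS : subring S.

Fact subring_pred_closed : subring_closed (subring_pred hS).
Proof.
have [S1 SB SM] := hS.
by split=> [|x y /asboolP Sx /asboolP Sy|x y /asboolP Sx /asboolP Sy];
  apply/asboolP; auto.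
Qed.
HB.instance Definition _ :=
  GRing.isSubringClosed.Build R (subring_pred hS) subring_pred_closed.

Definition subring_type := {x : R | x \in subring_pred hS}.
HB.instance Definition _ := [isSub of subring_type for @sval R _].
HB.instance Definition _ := [Choice of subring_type by <:].
HB.instance Definition _ :=
  GRing.SubChoice_isSubComPzRing.Build _ _ subring_type (subringClosedP _).

Definition subring_elt x (Sx : S x) : subring_type := Sub x (asboolT Sx).

Lemma subring_valP (u : subring_type) : S (val u).
Proof. by apply/asboolP; case: u. Qed.

End Subring.

Section ZSpan.
Variable R : zmodType.

Inductive zspan (X : R -> Prop) : R -> Prop :=
| zspan0 : zspan X 0
| zspan_gen x : X x -> zspan X x
| zspanD x y : zspan X x -> zspan X y -> zspan X (x + y)
| zspanN x : zspan X x -> zspan X (- x).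

Lemma zspanB X x y : zspan X x -> zspan X y -> zspan X (x - y).
Proof. by move=> Xx Xy; apply/zspanD/zspanN. Qed.

Lemma zspan_mono (X Y : R -> Prop) x :
  (forall z, X z -> Y z) -> zspan X x -> zspan Y x.
Proof.
move=> XY; elim=> [|z /XY|z w _ Yz _ Yw|z _ Yz]; [exact: zspan0|exact: zspan_gen|..].
  exact: zspanD.
exact: zspanN.
Qed.

End ZSpan.

Lemma zspanM (R : comPzRingType) (X Y Z : R -> Prop) x y :
  (forall u v, X u -> Y v -> zspan Z (u * v)) ->
  zspan X x -> zspan Y y -> zspan Z (x * y).
Proof.
move=> XYZ Xx Yy; elim: Xx => [|u Xu|u w _ Zu _ Zw|u _ Zu].
- by rewrite mul0r; apply: zspan0.
- elim: Yy => [|v Yv|v w _ Zv _ Zw|v _ Zv].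
  + by rewrite mulr0; apply: zspan0.
  + exact: XYZ.
  + by rewrite mulrDr; apply: zspanD.
  + by rewrite mulrN; apply: zspanN.
- by rewrite mulrDl; apply: zspanD.
- by rewrite mulNr; apply: zspanN.
Qed.

(** * Congruences as kernels of ring representations *)

Definition zcomb (A : Type) (T : zmodType) (f : A -> T) (l : seq (int * A)) : T :=
  \sum_(p <- l) f p.2 *~ p.1.

Lemma zcomb_cat (A : Type) (T : zmodType) (f : A -> T) l l' :
  zcomb f (l ++ l') = zcomb f l + zcomb f l'.
Proof. exact: big_cat. Qed.

Lemma zcomb_opp (A : Type) (T : zmodType) (f : A -> T) l :
  zcomb f [seq (- p.1, p.2) | p <- l] = - zcomb f l.
Proof. by rewrite /zcomb big_map -sumrN; apply: eq_bigr => p _; rewrite mulrNz. Qed.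

Definition ring_rep (A : sesquiad) (T : comPzRingType) (psi : A -> T) :=
  [/\ forall x y, psi (sq_mul x y) = psi x * psi y, psi (sq_one A) = 1,
      psi (sq_zero A) = 0 & forall l b, sq_sum l b -> zcomb psi l = psi b].

Lemma ring_rep_rmorph (A : sesquiad) (T U : comPzRingType) (psi : A -> T)
    (f : {rmorphism T -> U}) :
  ring_rep psi -> ring_rep (f \o psi).
Proof.
case=> psiM psi1 psi0 psiS; split=> [x y|||l b /psiS psi_b] /=.
- by rewrite psiM rmorphM.
- by rewrite psi1 rmorph1.
- by rewrite psi0 rmorph0.
by rewrite -psi_b /zcomb rmorph_sum; apply: eq_bigr => p _; rewrite rmorphMz.
Qed.

Lemma ring_rep_comp (A B : sesquiad) (T : comPzRingType) (f : A -> B) (psi : B -> T) :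
  is_sq_morph f -> ring_rep psi -> ring_rep (psi \o f).
Proof.
case=> fM f1 f0 fS [psiM psi1 psi0 psiS]; split=> [x y|||l b /fS /psiS] /=.
- by rewrite fM psiM.
- by rewrite f1 psi1.
- by rewrite f0 psi0.
by rewrite /zcomb big_map.
Qed.

Lemma sesquiad_embedding (A : sesquiad) :
  exists (R : comPzRingType) (phi : A -> R),
    [/\ injective phi, ring_rep phi & forall l b, zcomb phi l = phi b -> sq_sum l b].
Proof.
case: (sq_ax A) => _ _ _ _ [R [phi [phi_inj phiM phi1 phi0 phiS]]].
by exists R, phi; split=> // [|l b /phiS //]; split=> // l b /phiS.
Qed.

Section RepImage.
Variables (A : sesquiad) (T : comPzRingType) (psi : A -> T).
Hypothesis psi_rep : ring_rep psi.

Definition rep_img := {t : T | exists a, t = psi a}.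

Definition rep_elt (a : A) : rep_img := exist _ (psi a) (ex_intro _ a erefl).

Definition rep_img_mul (s t : rep_img) : rep_img.
Proof.
exists (sval s * sval t); have [[a ->] [b ->]] := (svalP s, svalP t).
by exists (sq_mul a b); case: psi_rep.
Defined.

Lemma rep_img_val_inj : injective (sval : rep_img -> T).
Proof. by move=> [s ps] [t pt] /= st; apply: eq_exist. Qed.

Definition rep_img_sum : sumrel rep_img := fun l b => zcomb sval l = sval b.

Lemma rep_img_sesquiad :
  is_sesquiad rep_img_mul (rep_elt (sq_one A)) (rep_elt (sq_zero A)) rep_img_sum.
Proof.
have [_ psi1 psi0 _] := psi_rep.
split=> [x y|x y z|x|x|]; try apply: rep_img_val_inj => /=.
- exact: mulrC.
- exact: mulrA.
- by rewrite psi1 mul1r.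
- by rewrite psi0 mul0r.
by exists T, sval; split=> //; exact: rep_img_val_inj.
Qed.

Definition rep_img_sq := Sesquiad rep_img_sesquiad.

Lemma ker_rep_congruence : is_congruence (fun x y => psi x = psi y).
Proof.
have [psiM psi1 psi0 psiS] := psi_rep.
exists rep_img_sq, rep_elt; split.
- split=> [x y|||l b /psiS]; try apply: rep_img_val_inj => //=.
  by rewrite /sq_sum /= /rep_img_sum /zcomb big_map.
- by move=> t; have [a ea] := svalP t; exists a; apply: rep_img_val_inj.
by move=> x y; split=> [?|/(congr1 sval)//]; apply: rep_img_val_inj.
Qed.

End RepImage.

Lemma congruenceP (A : sesquiad) (C : rel A) :
  is_congruence C <->
  exists (T : comPzRingType) (psi : A -> T),
    ring_rep psi /\ forall x y, C x y <-> psi x = psi y.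
Proof.
split=> [[Q [pi [pi_morph _ Cpi]]]|[T [psi [psi_rep Cpsi]]]].
  have [R [phi [phi_inj phi_rep _]]] := sesquiad_embedding Q.
  exists R, (phi \o pi); split; first exact: ring_rep_comp.
  by move=> x y; rewrite Cpi /=; split=> [->|/phi_inj].
have [Q [pi [pi_morph pi_surj Kpi]]] := ker_rep_congruence psi_rep.
by exists Q, pi; split=> // x y; rewrite Cpsi.
Qed.

Lemma congruence_refl (A : sesquiad) (C : rel A) x : is_congruence C -> C x x.
Proof. by move=> [Q [pi [_ _ Cpi]]]; apply/Cpi. Qed.

Lemma congruence_preimage (A B : sesquiad) (f : A -> B) (D : rel B) :
  is_sq_morph f -> is_congruence D -> is_congruence (fun x y => D (f x) (f y)).
Proof.
move=> f_morph /congruenceP [T [psi [psi_rep Dpsi]]]; apply/congruenceP.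
by exists T, (psi \o f); split=> [|x y]; [exact: ring_rep_comp | exact: Dpsi].
Qed.

Definition cong_closure (A : sesquiad) (G : rel A) : rel A :=
  fun x y => forall E, is_congruence E -> rel_le G E -> E x y.

Lemma cong_closure_ext (A : sesquiad) (G : rel A) : rel_le G (cong_closure G).
Proof. by move=> x y Gxy E _; apply. Qed.

Lemma cong_closure_min (A : sesquiad) (G E : rel A) :
  is_congruence E -> rel_le G E -> rel_le (cong_closure G) E.
Proof. by move=> E_cong GE x y; apply. Qed.

Lemma cong_closure_mono (A : sesquiad) (G H : rel A) :
  rel_le G H -> rel_le (cong_closure G) (cong_closure H).
Proof. by move=> GH x y Gxy E E_cong HE; apply: Gxy => // a b /GH/HE. Qed.

Lemma generated_byE (A : sesquiad) (C : rel A) g :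
  generated_by C g <-> forall x y, C x y <-> cong_closure (rel_of_seq g) x y.
Proof.
have gE E : rel_le (rel_of_seq g) E <-> forall p, List.In p g -> E p.1 p.2.
  by split=> [gE [a b] /gE|gE a b /gE].
by split=> Cg x y; rewrite Cg; split=> Exy E E_cong /gE; apply: Exy.
Qed.

Lemma congruence_ext (A : sesquiad) (C D : rel A) :
  (forall x y, C x y <-> D x y) -> is_congruence C -> is_congruence D.
Proof.
move=> CD [Q [pi [pi_morph pi_surj Cpi]]].
by exists Q, pi; split=> // x y; rewrite -CD.
Qed.

Section Embedding.
Variables (A : sesquiad) (R : comPzRingType) (phi : A -> R).
Hypotheses (phi_rep : ring_rep phi)
           (phi_sumK : forall l b, zcomb phi l = phi b -> sq_sum l b).

Definition zimg : R -> Prop := zspan (fun z => exists a, z = phi a).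

Lemma zimg_phi a : zimg (phi a).
Proof. by apply: zspan_gen; exists a. Qed.

Lemma zimg_subring : subring zimg.
Proof.
have [phiM phi1 _ _] := phi_rep.
split=> [|x y|x y]; [rewrite -phi1; exact: zimg_phi | exact: zspanB |].
by apply: zspanM => _ _ [a ->] [b ->]; rewrite -phiM; apply: zimg_phi.
Qed.

Definition zimg_ring := subring_type zimg_subring.

Definition zimg_elt (a : A) : zimg_ring := subring_elt zimg_subring (zimg_phi a).

Lemma zimg_elt_rep : ring_rep zimg_elt.
Proof.
have [phiM phi1 phi0 phiS] := phi_rep.
split=> [x y|||l b /phiS phi_b]; apply: val_inj.
- by rewrite /= phiM.
- by rewrite /= phi1.
- by rewrite /= phi0.
rewrite /= -phi_b; apply: etrans (rmorph_sum (val : zimg_ring -> R) _ _ _) _.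
by apply: eq_bigr => p _; rewrite rmorphMz.
Qed.

(* zimg is Z[A] and cong_ideal G is the ideal I_G of Z[A]. *)
Definition cong_ideal (G : rel A) : R -> Prop :=
  zspan (fun z => exists c a b, G a b /\ z = phi c * (phi a - phi b)).

Lemma cong_idealM G x z : zimg x -> cong_ideal G z -> cong_ideal G (x * z).
Proof.
have [phiM _ _ _] := phi_rep.
apply: zspanM => _ _ [d ->] [c [a [b [Gab ->]]]]; apply: zspan_gen.
by exists (sq_mul d c), a, b; rewrite phiM mulrA.
Qed.

Lemma cong_ideal_mono G H z : rel_le G H -> cong_ideal G z -> cong_ideal H z.
Proof.
by move=> GH; apply: zspan_mono => _ [c [a [b [/GH Hab ->]]]]; exists c, a, b.
Qed.

Lemma cong_ideal_gen (G : rel A) x y : G x y -> cong_ideal G (phi x - phi y).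
Proof.
move=> Gxy; apply: zspan_gen; exists (sq_one A), x, y.
by case: phi_rep => _ -> _ _; rewrite mul1r.
Qed.

Lemma cong_ideal_ker (T : comPzRingType) (psi : A -> T) z :
  ring_rep psi -> cong_ideal (fun a b => psi a = psi b) z ->
  exists l, z = zcomb phi l /\ zcomb psi l = 0.
Proof.
case=> psiM _ _ _; have [phiM _ _ _] := phi_rep.
elim=> [|_ [c [a [b [eab ->]]]]|_ _ _ [l [-> el]] _ [l' [-> el']]|_ _ [l [-> el]]].
- by exists [::]; rewrite /zcomb !big_nil.
- exists [:: (1, sq_mul c a); (-1, sq_mul c b)].
  rewrite /zcomb !big_cons !big_nil /= !mulr1z !mulrN1z !addr0 !psiM !phiM eab.
  by rewrite mulrBr subrr.
- by exists (l ++ l'); rewrite !zcomb_cat el el' addr0.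
by exists [seq (- p.1, p.2) | p <- l]; rewrite !zcomb_opp el oppr0.
Qed.

(* phi x = phi y + (a Z-combination killed by psi) is a defined sum in A,
   which psi respects. *)
Lemma ring_rep_cong_ideal (T : comPzRingType) (psi : A -> T) x y :
  ring_rep psi -> cong_ideal (fun a b => psi a = psi b) (phi x - phi y) ->
  psi x = psi y.
Proof.
move=> psi_rep /(cong_ideal_ker psi_rep) [l [el psil]].
have /phi_sumK : zcomb phi ((1, y) :: l) = phi x.
  by rewrite /zcomb big_cons -/(zcomb phi l) -el /= mulr1z addrC subrK.
case: psi_rep => _ _ _ /[apply]; rewrite /zcomb big_cons -/(zcomb psi l) psil.
by rewrite addr0 mulr1z.
Qed.

Lemma congruence_cong_ideal C x y :
  is_congruence C -> cong_ideal C (phi x - phi y) -> C x y.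
Proof.
move=> /congruenceP [T [psi [psi_rep Cpsi]]] Cxy; apply/Cpsi.
by apply: (ring_rep_cong_ideal psi_rep); apply: cong_ideal_mono Cxy => a b /Cpsi.
Qed.

Lemma cong_ideal_congruence G :
  is_congruence (fun x y => cong_ideal G (phi x - phi y)).
Proof.
pose J (u : zimg_ring) := cong_ideal G (val u).
have J_ideal : ideal J.
  split=> [|u v|u v]; rewrite /J ?rmorph0 ?rmorphD ?rmorphM; first exact: zspan0.
    exact: zspanD.
  by apply: cong_idealM; apply: subring_valP.
apply/congruenceP; exists (ideal_quot J_ideal), (qproj J_ideal \o zimg_elt).
split=> [|x y]; first exact/ring_rep_rmorph/zimg_elt_rep.
by rewrite qproj_eq /J rmorphB.
Qed.

Lemma cong_closureE G x y : cong_closure G x y <-> cong_ideal G (phi x - phi y).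
Proof.
split=> [Gxy|Gxy E E_cong GE].
  exact: Gxy _ (cong_ideal_congruence G) (@cong_ideal_gen G).
by apply: congruence_cong_ideal => //; apply: cong_ideal_mono Gxy.
Qed.

Lemma cong_ideal_chain (C : nat -> rel A) z :
  (forall n x y, C n x y -> C n.+1 x y) ->
  cong_ideal (fun x y => exists n, C n x y) z -> exists n, cong_ideal (C n) z.
Proof.
move=> /rel_chain_le Cle.
have up m n w : (m <= n)%N -> cong_ideal (C m) w -> cong_ideal (C n) w.
  by move=> mn; apply/cong_ideal_mono/Cle.
elim=> [|_ [c [a [b [[n Cab] ->]]]]|x y _ [m Zx] _ [n Zy]|x _ [n Zx]].
- by exists 0%N; apply: zspan0.
- by exists n; apply: zspan_gen; exists c, a, b.
- exists (maxn m n); apply: zspanD; first exact: up (leq_maxl m n) Zx.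
  exact: up (leq_maxr m n) Zy.
by exists n; apply: zspanN.
Qed.

End Embedding.

Lemma cong_closure_congruence (A : sesquiad) (G : rel A) :
  is_congruence (cong_closure G).
Proof.
have [R [phi [_ phi_rep phi_sumK]]] := sesquiad_embedding A.
apply: congruence_ext (cong_ideal_congruence phi_rep G) => x y.
exact: iff_sym (cong_closureE phi_rep phi_sumK G x y).
Qed.

(** * Ascending chains of congruences *)

Lemma chain_union_congruence (A : sesquiad) (C : nat -> rel A) :
  (forall n, is_congruence (C n)) -> (forall n x y, C n x y -> C n.+1 x y) ->
  is_congruence (fun x y => exists n, C n x y).
Proof.
move=> C_cong C_incr; have [R [phi [_ phi_rep phi_sumK]]] := sesquiad_embedding A.
apply: congruence_ext (cong_ideal_congruence phi_rep _) => x y.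
split=> [/(cong_ideal_chain C_incr) [n]|]; last exact: cong_ideal_gen.
by move=> /(congruence_cong_ideal phi_rep phi_sumK (C_cong n)); exists n.
Qed.

Lemma chain_seq_bound (A : Type) (C : nat -> rel A) (g : seq (A * A)) :
  (forall n x y, C n x y -> C n.+1 x y) ->
  (forall a b, List.In (a, b) g -> exists n, C n a b) ->
  exists N, rel_le (rel_of_seq g) (C N).
Proof.
move=> /rel_chain_le Cle; elim: g => [|[a b] g IHg] gC; first by exists 0%N.
have [m Cab] := gC a b (or_introl erefl).
have [n gCn] := IHg (fun a' b' gab => gC a' b' (or_intror gab)).
exists (maxn m n) => a' b' [[<- <-]|/gCn]; first exact: Cle (leq_maxl m n) _ _ Cab.
exact: Cle (leq_maxr m n) _ _.
Qed.

Lemma noetherian_acc (A : sesquiad) : noetherian A -> acc_congruences A.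
Proof.
move=> noethA C C_cong C_incr; have Cle := rel_chain_le C_incr.
have [g /generated_byE Ug] := noethA _ (chain_union_congruence C_cong C_incr).
have [N gCN] : exists N, rel_le (rel_of_seq g) (C N).
  apply: (chain_seq_bound C_incr) => a b gab.
  by apply: (Ug a b).2; apply: cong_closure_ext.
exists N => n Nn x y; split=> [Cnxy|]; last exact: Cle.
by apply: cong_closure_min (C_cong N) gCN _ _ _; apply: (Ug x y).1; exists n.
Qed.

Lemma congruence_ind (A : sesquiad) (P : rel A -> Prop) : acc_congruences A ->
  (forall C, is_congruence C ->
     (forall D, is_congruence D -> rel_lt C D -> P D) -> P C) ->
  forall C, is_congruence C -> P C.
Proof.
move=> accA IH C0 C0_cong; apply: contrapT => notP0.
pose bad C := is_congruence C /\ ~ P C.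
have [next next_bad] :
    {next : rel A -> rel A & forall C, bad C -> bad (next C) /\ rel_lt C (next C)}.
  apply: (@choice _ _ (fun C D => bad C -> bad D /\ rel_lt C D)) => C.
  have [[C_cong notPC]|nbad] := pselect (bad C); last by exists C; move/nbad.
  suff [D D_bad CD] : exists2 D, bad D & rel_lt C D by exists D.
  apply: contrapT => noD; apply: notPC; apply: IH => // D D_cong CD.
  by apply: contrapT => notPD; apply: noD; exists D.
pose chain n := iter n next C0.
have chain_bad n : bad (chain n).
  by elim: n => [|n IHn]; [split | exact: (next_bad _ IHn).1].
have chain_lt n : rel_lt (chain n) (chain n.+1).
  exact: (next_bad _ (chain_bad n)).2.
have [N chainN] := accA chain (fun n => (chain_bad n).1) (fun n => (chain_lt n).1).
have [_ [x [y [xy nxy]]]] := chain_lt N.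
exact/nxy/(chainN N.+1 (leqnSn N)).
Qed.

Lemma acc_noetherian (A : sesquiad) : acc_congruences A -> noetherian A.
Proof.
move=> accA C C_cong.
pose gen_in_C D := exists g, rel_le (rel_of_seq g) C /\
  forall x y, D x y <-> cong_closure (rel_of_seq g) x y.
suff : forall D, is_congruence D -> gen_in_C D -> fg_congruence C.
  apply; first exact: (@cong_closure_congruence _ (rel_of_seq [::])).
  by exists [::]; split=> // a b [].
apply: (congruence_ind accA) => D D_cong IH [g [gC Dg]].
have [CD|] := pselect (rel_le C D).
  exists g; apply/generated_byE => x y; rewrite -Dg.
  by split=> [/CD //|/Dg]; apply: cong_closure_min.
move=> /existsNP [x /existsNP [y /not_implyP [Cxy nDxy]]].
pose g' := (x, y) :: g.
apply: (IH (cong_closure (rel_of_seq g'))); first exact: cong_closure_congruence.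
  split=> [a b /Dg|]; first by apply: cong_closure_mono => a' b'; right.
  by exists x, y; split=> //; apply: cong_closure_ext; left.
by exists g'; split=> // a b [[<- <-] //|/gC].
Qed.

Lemma noetherianP (A : sesquiad) : noetherian A <-> acc_congruences A.
Proof. by split; [exact: noetherian_acc | exact: acc_noetherian]. Qed.

Lemma noetherian_image (A B : sesquiad) (f : A -> B) :
  noetherian A -> is_sq_morph f -> (forall b : B, exists a, f a = b) ->
  noetherian B.
Proof.
move=> /noetherianP accA f_morph f_surj; apply/noetherianP => D D_cong D_incr.
have [N DN] := accA (fun n x y => D n (f x) (f y))
  (fun n => congruence_preimage f_morph (D_cong n)) (fun n x y => D_incr n _ _).
exists N => n Nn b b'; have [[a <-] [a' <-]] := (f_surj b, f_surj b').
exact: DN.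
Qed.

(** * The spectrum *)

Section Spectrum.
Variable A : sesquiad.
Local Notation prime := (@is_prime_congruence A).

Definition zero_locus (C : rel A) : specset A := fun P => rel_le C P.

Definition locus_union (Ds : seq (rel A)) : specset A :=
  fun P => exists2 D, List.In D Ds & zero_locus D P.

Definition descending (Z : nat -> specset A) :=
  forall n P, prime P -> Z n.+1 P -> Z n P.

Definition stationary (Z : nat -> specset A) :=
  exists N, forall n, (N <= n)%N -> forall P, prime P -> (Z n P <-> Z N P).

Definition noetherian_locus (C : rel A) :=
  forall Z, (forall n, spec_closed (Z n)) -> descending Z ->
  (forall n P, prime P -> Z n P -> zero_locus C P) -> stationary Z.

Lemma zero_locus_closed C : spec_closed (zero_locus C).
Proof.
move=> P P_prime /existsNP [x /existsNP [y /not_implyP [Cxy nPxy]]].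
exists [:: (x, y)]; split=> [p [<- //|[]]|P' _ /(_ (x, y) (or_introl erefl))].
by move=> nP'xy /(_ x y Cxy).
Qed.

Lemma spec_closedI (Z1 Z2 : specset A) :
  spec_closed Z1 -> spec_closed Z2 -> spec_closed (fun P => Z1 P /\ Z2 P).
Proof.
move=> Z1_closed Z2_closed P P_prime /not_andP [nZ1|nZ2].
  have [g [gP gZ]] := Z1_closed P P_prime nZ1.
  by exists g; split=> // P' P'_prime /(gZ P' P'_prime) nZ1' [].
have [g [gP gZ]] := Z2_closed P P_prime nZ2.
by exists g; split=> // P' P'_prime /(gZ P' P'_prime) nZ2' [].
Qed.

Lemma spec_closedU (Z1 Z2 : specset A) :
  spec_closed Z1 -> spec_closed Z2 -> spec_closed (fun P => Z1 P \/ Z2 P).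
Proof.
move=> Z1_closed Z2_closed P P_prime /not_orP [nZ1 nZ2].
have [g1 [g1P g1Z]] := Z1_closed P P_prime nZ1.
have [g2 [g2P g2Z]] := Z2_closed P P_prime nZ2.
exists (g1 ++ g2); split=> [p|P' P'_prime g12P'].
  by case/(List.in_app_or g1 g2 p); [apply: g1P | apply: g2P].
have in_cat p : List.In p g1 \/ List.In p g2 -> List.In p (g1 ++ g2).
  exact: List.in_or_app.
by case; [apply: g1Z | apply: g2Z] => // p gp; apply/g12P'/in_cat; [left | right].
Qed.

Lemma spec_closed_ext (Z Z' : specset A) :
  (forall P, prime P -> Z P <-> Z' P) -> spec_closed Z -> spec_closed Z'.
Proof.
move=> ZZ' Z_closed P P_prime; rewrite -ZZ' // => /(Z_closed P P_prime) [g [gP gZ]].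
by exists g; split=> // P' P'_prime /(gZ P' P'_prime); rewrite ZZ'.
Qed.

Lemma locus_union_closed Ds : spec_closed (locus_union Ds).
Proof.
elim: Ds => [|D Ds IHDs]; first by move=> P _ _; exists [::]; split=> // P' _ _ [].
apply: (spec_closed_ext _ (spec_closedU (@zero_locus_closed D) IHDs)) => P _.
split=> [[PD|[D' DsD' PD']]|[D' [<-|DsD'] PD']]; last by right; exists D'.
- by exists D => //; left.
- by exists D' => //; right.
by left.
Qed.

Lemma spec_closed_up (Z : specset A) P P' :
  spec_closed Z -> prime P -> Z P -> prime P' -> rel_le P P' -> Z P'.
Proof.
move=> Z_closed P_prime ZP P'_prime PP'; apply: contrapT => nZP'.
have [g [gP' gZ]] := Z_closed P' P'_prime nZP'.
by apply: (gZ P P_prime) => // p gp /PP'; apply: gP'.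
Qed.

Lemma stationary_union (Z Z1 Z2 : nat -> specset A) :
  (forall n P, prime P -> (Z n P <-> Z1 n P \/ Z2 n P)) ->
  stationary Z1 -> stationary Z2 -> stationary Z.
Proof.
move=> ZE [N1 Z1N] [N2 Z2N]; exists (maxn N1 N2) => n Nn P P_prime.
have N1n : (N1 <= n)%N by apply: leq_trans Nn; apply: leq_maxl.
have N2n : (N2 <= n)%N by apply: leq_trans Nn; apply: leq_maxr.
rewrite !ZE // (Z1N n N1n) // (Z2N n N2n) // (Z1N _ (leq_maxl N1 N2)) //.
by rewrite (Z2N _ (leq_maxr N1 N2)).
Qed.

Lemma stationary_shift (Z : nat -> specset A) N :
  stationary (fun n => Z (N + n)%N) -> stationary Z.
Proof.
move=> [M ZM]; exists (N + M)%N => n NMn P P_prime.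
have Nn : (N <= n)%N by apply: leq_trans NMn; apply: leq_addr.
by rewrite -(subnKC Nn) ZM // leq_subRL.
Qed.

Lemma stationary_cover (Ds : seq (rel A)) :
  (forall D, List.In D Ds -> noetherian_locus D) ->
  forall Z, (forall n, spec_closed (Z n)) -> descending Z ->
  (forall n P, prime P -> Z n P -> locus_union Ds P) -> stationary Z.
Proof.
elim: Ds => [|D Ds IHDs] Ds_noeth Z Z_closed Z_desc ZDs.
  by exists 0%N => n _ P P_prime; split=> /(ZDs _ P P_prime) [].
pose Z1 n P := Z n P /\ zero_locus D P.
pose Z2 n P := Z n P /\ locus_union Ds P.
apply: (@stationary_union _ Z1 Z2).
- move=> n P P_prime; split=> [ZP|[[]|[]] //].
  case: (ZDs n P P_prime ZP) => D' [<-|DsD'] PD'; first by left.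
  by right; split=> //; exists D'.
- apply: (Ds_noeth D (or_introl erefl)) => [n|n P P_prime [ZP PD]|n P _ []] //.
    exact/spec_closedI/zero_locus_closed.
  by split=> //; apply: Z_desc.
apply: IHDs => [D' DsD'|n|n P P_prime [ZP PDs]|n P _ []] //.
- by apply: Ds_noeth; right.
- exact/spec_closedI/locus_union_closed.
by split=> //; apply: Z_desc.
Qed.

Definition cong_join (C : rel A) (p : A * A) : rel A :=
  cong_closure (fun a b => C a b \/ (a, b) = p).

Lemma cong_join_gt C p : ~ C p.1 p.2 -> rel_lt C (cong_join C p).
Proof.
move=> nCp; split=> [x y Cxy|]; first by apply: cong_closure_ext; left.
by exists p.1, p.2; split=> //; apply: cong_closure_ext; right; case: p {nCp}.
Qed.

Lemma zero_locus_join C p P :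
  prime P -> zero_locus C P -> P p.1 p.2 -> zero_locus (cong_join C p) P.
Proof.
move=> [P_cong _ _] CP; case: p => a0 b0 /= Pp.
by apply: cong_closure_min => // a b [/CP //|[-> ->]].
Qed.

Lemma descending_le (Z : nat -> specset A) m n P :
  descending Z -> (m <= n)%N -> prime P -> Z n P -> Z m P.
Proof.
move=> Z_desc /(homo_leq (f := Z) (r := fun X Y => forall P, prime P -> Y P -> X P)).
apply=> [X P' //|Y X W XY YW P' P'_prime /YW-/(_ P'_prime)/XY|k]; first exact.
exact: Z_desc.
Qed.

Definition noetherian_above (C : rel A) :=
  forall D, is_congruence D -> rel_lt C D -> noetherian_locus D.

Lemma noetherian_locus_join C p :
  noetherian_above C -> ~ C p.1 p.2 -> noetherian_locus (cong_join C p).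
Proof.
by move=> IH nCp; apply: IH; [exact: cong_closure_congruence | exact: cong_join_gt].
Qed.

Lemma noetherian_locus_reducible C a b f :
  noetherian_above C -> C (sq_mul a f) (sq_mul b f) -> ~ C a b ->
  ~ C f (sq_zero A) -> noetherian_locus C.
Proof.
move=> IH Cabf nCab nCf Z Z_closed Z_desc ZC.
pose Ds := [:: cong_join C (a, b); cong_join C (f, sq_zero A)].
apply: (@stationary_cover Ds) => //.
  by move=> D [<-|[<-|[]]]; apply: noetherian_locus_join.
move=> n P P_prime /(ZC n P P_prime) CP; have [_ _ P_int] := P_prime.
case: (P_int a b f (CP _ _ Cabf)) => Pp.
  by exists (cong_join C (a, b)); [left | exact: zero_locus_join].
by exists (cong_join C (f, sq_zero A)); [right; left | exact: zero_locus_join].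
Qed.

Lemma noetherian_locus_prime C :
  prime C -> noetherian_above C -> noetherian_locus C.
Proof.
move=> C_prime IH Z Z_closed Z_desc ZC.
have [ZC_all|/existsNP [N nZNC]] := pselect (forall n, Z n C).
  exists 0%N => n _ P P_prime.
  by split=> /(ZC _ P P_prime) CP;
    apply: spec_closed_up (Z_closed _) C_prime (ZC_all _) P_prime CP.
have [g [gC gZ]] := Z_closed N C C_prime nZNC.
apply: (@stationary_shift _ N).
apply: (@stationary_cover [seq cong_join C p | p <- g]).
- by move=> D /List.in_map_iff [p [<- gp]]; apply/noetherian_locus_join/gC.
- by move=> n; apply: Z_closed.
- by move=> n P P_prime; rewrite addnS; apply: Z_desc.
move=> n P P_prime ZP; apply: contrapT => nU.
apply: (gZ P P_prime); last exact: descending_le (leq_addr n N) P_prime ZP.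
move=> p gp Pp; apply: nU; exists (cong_join C p); first exact: List.in_map.
exact: zero_locus_join (ZC _ P P_prime ZP) Pp.
Qed.

Lemma noetherian_locus_step C :
  is_congruence C -> noetherian_above C -> noetherian_locus C.
Proof.
move=> C_cong IH.
have [C10|nC10] := pselect (C (sq_one A) (sq_zero A)).
  move=> Z _ _ ZC; exists 0%N => n _ P P_prime; have [_ nP10 _] := P_prime.
  by split=> /(ZC _ P P_prime)/(_ _ _ C10)/nP10.
have [[a [b [f [Cabf nCab nCf]]]]|C_int] := pselect (exists a b f,
    [/\ C (sq_mul a f) (sq_mul b f), ~ C a b & ~ C f (sq_zero A)]).
  exact: noetherian_locus_reducible IH Cabf nCab nCf.
apply: noetherian_locus_prime IH; split=> // a b f Cabf.
apply: contrapT => /not_orP [nCab nCf].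
by apply: C_int; exists a, b, f.
Qed.

Lemma acc_spec_noetherian : acc_congruences A -> spec_noetherian A.
Proof.
move=> accA Z Z_closed Z_desc.
have triv_cong := @cong_closure_congruence A (fun _ _ => False).
apply: (congruence_ind (P := noetherian_locus) accA _ triv_cong) => //.
- by move=> C C_cong IH; apply: noetherian_locus_step.
by move=> n P [P_cong _ _] _; apply: cong_closure_min.
Qed.

End Spectrum.

(** * Hilbert's basis theorem and finitely generated sesquiads *)

Definition acc_ideals (T : comPzRingType) :=
  forall J : nat -> T -> Prop, (forall n, ideal (J n)) ->
  (forall n x, J n x -> J n.+1 x) ->
  exists N, forall n, (N <= n)%N -> forall x, J n x -> J N x.

Lemma pred_chain_le (T : Type) (J : nat -> T -> Prop) :
  (forall n x, J n x -> J n.+1 x) ->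
  {homo J : m n / (m <= n)%N >-> (fun X Y => forall x, X x -> Y x) m n}.
Proof.
move=> J_incr; apply: homo_leq => [X x //|Y X W XY YW x /XY/YW //|n].
exact: J_incr.
Qed.

Lemma acc_ideals_int : acc_ideals int.
Proof.
move=> J J_ideal /pred_chain_le Jle.
pose U x := exists n, J n x.
have U_ideal : ideal U.
  split=> [|x y [m Jx] [n Jy]|x y [n Jy]]; first by exists 0%N; case: (J_ideal 0%N).
    exists (maxn m n); have [_ JD _] := J_ideal (maxn m n).
    by apply: JD; [apply: Jle (leq_maxl m n) _ Jx | apply: Jle (leq_maxr m n) _ Jy].
  by exists n; case: (J_ideal n) => _ _ JM; apply: JM.
have [[x0 [Ux0 x0_nz]]|U0] := pselect (exists x, U x /\ x != 0); last first.
  exists 0%N => n _ x Jnx; suff -> : x = 0 by case: (J_ideal 0%N).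
  by apply: contrapT => /eqP x_nz; apply: U0; exists x; split=> //; exists n.
pose posU (m : nat) := `[< U m%:Z /\ (0 < m)%N >].
have posU_x0 : exists m, posU m.
  exists `|x0|%N; apply/asboolP; rewrite absz_gt0; split=> //.
  by rewrite abszEsg; have [_ _ UM] := U_ideal; apply: UM.
have [d /asboolP [[N JNd] d_pos] d_min] := ex_minnP posU_x0.
exists N => n Nn x Jnx.
have [_ _ JNM] := J_ideal N.
have Ur : U (x %% d)%Z.
  have -> : (x %% d)%Z = x - (x %/ d)%Z * d by rewrite {2}(divz_eq x d) addrC addKr.
  apply: idealB => //; first by exists n.
  by exists N; apply: JNM.
have r0 : (x %% d)%Z = 0.
  apply: contrapT => /eqP r_nz.
  have r_ge0 : (0 <= x %% d)%Z by apply: modz_ge0; rewrite -absz_gt0.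
  have /d_min : posU `|(x %% d)%Z|%N.
    by apply/asboolP; rewrite absz_gt0 gez0_abs.
  by rewrite leqNgt -ltz_nat gez0_abs // ltz_pmod.
by rewrite (divz_eq x d) r0 addr0; apply: JNM.
Qed.

Section HilbertBasis.
Variable T : comNzRingType.

Definition lead_ideal (J : {poly T} -> Prop) (d : nat) (c : T) :=
  exists p, [/\ J p, (size p <= d.+1)%N & p`_d = c].

Lemma lead_ideal_ideal J d : ideal J -> ideal (lead_ideal J d).
Proof.
move=> [J0 JD JM]; split.
- by exists 0; rewrite size_poly0 coef0.
- move=> _ _ [p [Jp sp <-]] [q [Jq sq <-]]; exists (p + q); split; first exact: JD.
    by apply: leq_trans (size_polyD _ _) _; rewrite geq_max sp sq.
  by rewrite coefD.
move=> r _ [p [Jp sp <-]]; exists (r%:P * p); rewrite mul_polyC coefZ; split=> //.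
  by rewrite -mul_polyC; apply: JM.
exact: leq_trans (size_scale_leq _ _) sp.
Qed.

Lemma lead_idealS J d c : ideal J -> lead_ideal J d c -> lead_ideal J d.+1 c.
Proof.
move=> [_ _ JM] [p [Jp sp <-]]; exists (p * 'X); rewrite coefMX /=; split=> //.
  by rewrite mulrC; apply: JM.
by apply: leq_trans (size_polyMleq _ _) _; rewrite size_polyX addn2.
Qed.

Lemma lead_ideal_mono (J J' : {poly T} -> Prop) d c :
  (forall p, J p -> J' p) -> lead_ideal J d c -> lead_ideal J' d c.
Proof. by move=> JJ' [p [/JJ' J'p sp pd]]; exists p; split. Qed.

Lemma size_poly_coef0 (p : {poly T}) d :
  (size p <= d.+1)%N -> p`_d = 0 -> (size p <= d)%N.
Proof.
rewrite leq_eqVlt ltnS => /orP [/eqP sp pd|//].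
suff -> : p = 0 by rewrite size_poly0.
by apply/eqP; rewrite -lead_coef_eq0 lead_coefE sp /= pd.
Qed.

Lemma lead_ideal_eq (J J' : {poly T} -> Prop) :
  ideal J -> ideal J' -> (forall p, J p -> J' p) ->
  (forall d c, lead_ideal J' d c -> lead_ideal J d c) -> forall p, J' p -> J p.
Proof.
move=> J_ideal J'_ideal JJ' LJ' p; have [J0 JD _] := J_ideal.
move: {2}(size p) (leqnn (size p)) => n; elim: n p => [|d IHd] p sp J'p.
  by move: sp; rewrite leqn0 size_poly_eq0 => /eqP ->.
have [q [Jq sq qd]] := LJ' d p`_d (ex_intro _ p (And3 J'p sp erefl)).
rewrite -(subrK q p); apply: JD => //; apply: IHd.
  apply: size_poly_coef0; last by rewrite coefB qd subrr.
  by apply: leq_trans (size_polyD _ _) _; rewrite size_polyN geq_max sp sq.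
exact: idealB J'_ideal _ _ J'p (JJ' _ Jq).
Qed.

Lemma acc_ideals_poly : acc_ideals T -> acc_ideals {poly T}.
Proof.
move=> accT J J_ideal J_incr; have Jle := pred_chain_le J_incr.
have Lle d d' k k' c : (d <= d')%N -> (k <= k')%N ->
    lead_ideal (J k) d c -> lead_ideal (J k') d' c.
  move=> dd' kk' /(lead_ideal_mono (Jle _ _ kk')).
  elim: d' dd' => [|d' IHd']; first by rewrite leqn0 => /eqP <-.
  rewrite leq_eqVlt => /orP [/eqP <- //|/IHd' Ld'] /Ld'; exact: lead_idealS.
have [N0 N0_stat] := accT (fun d => lead_ideal (J d) d)
  (fun d => lead_ideal_ideal d (J_ideal d))
  (fun d c => Lle d d.+1 d d.+1 c (leqnSn d) (leqnSn d)).
have [K K_stat] : exists K, forall d, (d < N0)%N ->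
    forall k, (K <= k)%N -> forall c, lead_ideal (J k) d c -> lead_ideal (J K) d c.
  elim: N0 {N0_stat} => [|m [K IHm]]; first by exists 0%N.
  have [Km Km_stat] := accT (fun k => lead_ideal (J k) m)
    (fun k => lead_ideal_ideal m (J_ideal k))
    (fun k c => Lle m m k k.+1 c (leqnn m) (leqnSn k)).
  exists (maxn K Km) => d; rewrite ltnS leq_eqVlt => /orP [/eqP ->|dm] k Kk c Lc.
    apply: (Lle m m Km _ c (leqnn m) (leq_maxr K Km)); apply: (Km_stat k) Lc.
    exact: leq_trans (leq_maxr K Km) Kk.
  apply: (Lle d d K _ c (leqnn d) (leq_maxl K Km)); apply: (IHm d dm k) Lc.
  exact: leq_trans (leq_maxl K Km) Kk.
exists (maxn N0 K) => n Nn.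
apply: lead_ideal_eq; [exact: J_ideal | exact: J_ideal | exact: Jle |].
move=> d c Lc; have [dN0|N0d] := ltnP d N0.
  apply: (Lle d d K _ c (leqnn d) (leq_maxr N0 K)); apply: (K_stat d dN0 n) Lc.
  exact: leq_trans (leq_maxr N0 K) Nn.
have Lm : lead_ideal (J (maxn d n)) (maxn d n) c.
  exact: Lle (leq_maxl d n) (leq_maxr d n) Lc.
apply: (Lle N0 d N0 _ c N0d (leq_maxl N0 K)); apply: (N0_stat (maxn d n)) Lm.
exact: leq_trans N0d (leq_maxl d n).
Qed.

End HilbertBasis.

(* intpoly n is Z[X_0, ..., X_(n-1)], with X_(n-1) as the outermost variable. *)
Fixpoint intpoly (n : nat) : comNzRingType :=
  if n is k.+1 then {poly intpoly k} else int.

Lemma acc_ideals_intpoly n : acc_ideals (intpoly n).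
Proof. by elim: n => [|n IHn]; [exact: acc_ideals_int | exact: acc_ideals_poly]. Qed.

Section IntpolyEval.
Variables (T : comNzRingType) (v : nat -> T).

Fixpoint intpoly_eval (n : nat) : {rmorphism intpoly n -> T} :=
  match n return {rmorphism intpoly n -> T} with
  | 0 => ((intr : int -> T) : {rmorphism int -> T})
  | k.+1 => horner_morph (fun x => mulrC (v k) (intpoly_eval k x))
  end.

Fixpoint intpoly_var (n i : nat) : intpoly n :=
  match n return intpoly n with
  | 0 => 0
  | k.+1 => if i == k then 'X else (intpoly_var k i)%:P
  end.

Lemma intpoly_eval_var n i : (i < n)%N -> intpoly_eval n (intpoly_var n i) = v i.
Proof.
elim: n => [//|n IHn] /=; rewrite ltnS leq_eqVlt.
case: eqP => [-> _|ne /orP [/eqP //|lt_in]]; first exact: horner_morphX.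
by rewrite horner_morphC IHn.
Qed.

Lemma intpoly_eval_subring (S : T -> Prop) :
  subring S -> (forall i, S (v i)) -> forall n p, S (intpoly_eval n p).
Proof.
move=> [S1 SB SM] Sv.
have S0 : S 0 by rewrite -(subrr 1); apply: SB.
have SD x y : S x -> S y -> S (x + y).
  by move=> Sx Sy; have := SB x (0 - y) Sx (SB 0 y S0 Sy); rewrite sub0r opprK.
elim=> [|k IHk] p /=.
  have Sn m : S (1 *+ m) by elim: m => [|m IHm]; rewrite ?mulr0n ?mulrS //; apply: SD.
  case: p => m; first exact: Sn.
  by rewrite NegzE mulrNz -sub0r; apply: SB; [exact: S0 | exact: Sn].
rewrite /horner_morph horner_coef; apply: big_ind => // i _.
apply: (SM); first by rewrite coef_map; apply: IHk.
by elim: (nat_of_ord i) => [|m IHm]; rewrite ?expr0 ?exprS //; apply: SM.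
Qed.

End IntpolyEval.

Definition free_var (n : nat) (i : 'I_n) : free_car n :=
  Some [ffun j => (j == i) : nat].

Lemma free_car_ind n (P : free_car n -> Prop) :
  P (free_zero n) -> P (free_one n) -> (forall i, P (free_var i)) ->
  (forall x y, P x -> P y -> P (free_mul x y)) -> forall x, P x.
Proof.
move=> P0 P1 Pvar PM [e|//].
have P_const0 (e' : {ffun 'I_n -> nat}) : (forall i, e' i = 0%N) -> P (Some e').
  move=> e'0; suff -> : e' = [ffun => 0%N] by [].
  by apply/ffunP => i; rewrite ffunE e'0.
suff : forall s (e' : {ffun 'I_n -> nat}), (\sum_i e' i <= s)%N -> P (Some e').
  by apply; apply: leqnn.
elim=> [|s IHs] {}e se.
  move: se; rewrite leqn0 sum_nat_eq0 => /forallP e0.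
  by apply: P_const0 => i; apply/eqP/e0.
have [[i0 ei0]|/forallNP e0] := pselect (exists i, 0 < e i)%N; last first.
  by apply: P_const0 => i; apply/eqP; rewrite -leqn0 leqNgt; apply/negP/e0.
pose e' := [ffun j => e j - (j == i0)]%N.
have -> : Some e = free_mul (Some e') (free_var i0).
  congr Some; apply/ffunP => j; rewrite !ffunE.
  by case: eqP => [->|_]; rewrite ?subnK ?subn0 ?addn0.
apply: PM (Pvar i0); apply: IHs; rewrite -ltnS; apply: leq_trans se.
rewrite [X in (X < _)%N](bigD1 i0) // [X in (_ < X)%N](bigD1 i0) //= ffunE eqxx subn1.
rewrite (eq_bigr e) => [|j /negbTE ji0]; last by rewrite ffunE ji0 subn0.
by rewrite ltn_add2r prednK.
Qed.

Section NonZeroRing.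
Variable T : comPzRingType.
(* horner_morph needs a nontrivial codomain. *)
Definition nz_ring of (1 : T) != 0 := T.
Variable T_nz : (1 : T) != 0.
HB.instance Definition _ := GRing.ComPzRing.on (nz_ring T_nz).
HB.instance Definition _ := GRing.PzSemiRing_isNonZero.Build (nz_ring T_nz) T_nz.
End NonZeroRing.

Lemma fg_acc_congruences (A : sesquiad) : fg_sesquiad A -> acc_congruences A.
Proof.
move=> [n [f [[fM f1 f0 _] f_surj]]] C C_cong C_incr.
have [R [phi [phi_inj phi_rep phi_sumK]]] := sesquiad_embedding A.
have [phiM phi1 phi0 _] := phi_rep.
have [R0|R_nz] := eqVneq (1 : R) 0.
  have A0 a : a = sq_zero A by apply: phi_inj; rewrite phi0 -[phi a]mulr1 R0 mulr0.
  by exists 0%N => m _ x y; rewrite (A0 x) (A0 y); split=> _; apply: congruence_refl.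
pose v k : nz_ring R_nz := if insub k is Some i then phi (f (free_var i)) else 0.
pose ev := intpoly_eval v n.
have ev_zimg p : zimg phi (ev p).
  apply: (intpoly_eval_subring (zimg_subring phi_rep)) => k.
  by rewrite /v; case: insub => [i|]; [apply: zimg_phi | apply: zspan0].
have ev_onto a : exists p, ev p = phi a.
  have [x <-] := f_surj a; elim/free_car_ind: x => [|||x y [p ep] [q eq]].
  - by exists 0; rewrite rmorph0 f0 phi0.
  - by exists 1; rewrite rmorph1 f1 phi1.
  - by move=> i; exists (intpoly_var n i); rewrite intpoly_eval_var // /v valK.
  by exists (p * q); rewrite rmorphM ep eq fM phiM.
pose J k p := cong_ideal phi (C k) (ev p).
have J_ideal k : ideal (J k).
  split=> [|p q|p q]; rewrite /J ?rmorph0 ?rmorphD ?rmorphM; first exact: zspan0.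
    exact: zspanD.
  exact/cong_idealM/ev_zimg.
have [N JN] := acc_ideals_intpoly J_ideal (fun k p => cong_ideal_mono (C_incr k)).
exists N => m Nm x y; split=> [Cmxy|]; last exact: rel_chain_le.
have [[p ep] [q eq]] := (ev_onto x, ev_onto y).
have : J m (p - q) by rewrite /J rmorphB ep eq; exact: cong_ideal_gen.
by move/(JN m Nm); rewrite /J rmorphB ep eq; exact: congruence_cong_ideal.
Qed.

Theorem mainTheorem12 (A : sesquiad) :
  (noetherian A <-> acc_congruences A) /\
  (forall (B : sesquiad) (phi : A -> B),
      noetherian A -> is_sq_morph phi -> (forall b : B, exists a, phi a = b) ->
      noetherian B) /\
  (fg_sesquiad A -> noetherian A) /\
  (noetherian A -> spec_noetherian A).
Proof.
split; first exact: noetherianP.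
split; first by move=> B phi; apply: noetherian_image.
split; first by move=> /fg_acc_congruences /noetherianP.
by move=> /noetherianP /acc_spec_noetherian.
Qed.
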